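(* For every response $y$, $$\mathbb{E}_N\big[(\hat\pi_N(y|x))^2\big]=\frac{(\phi_\beta(y|x))^2}{1-e^{-n}}\int_0^\infty\!\!\int_0^\infty\big(n+n^2\Phi_\beta(s_1)\Phi_\beta(s_2)\big)(\pi_{\mathrm{gen}}(y|x))^2e^{-(s_1+s_2)\phi_\beta(y|x)}\exp\big(n[\Phi_\beta(s_1)\Phi_\beta(s_2)-1]\big)\,ds_1\,ds_2.$$
   Context: Fix a prompt $x$, a countable response space $\mathcal{Y}$, conditional distributions $\pi_{\mathrm{target}}$ and $\pi_{\mathrm{gen}}$ (full support), a reward $r$, and $\beta>0$. Let $\phi_\beta(y|x)=\frac{\pi_{\mathrm{target}}(y|x)}{\pi_{\mathrm{gen}}(y|x)}e^{\beta r(y|x)}$ and $\Phi_\beta(s)=\mathbb{E}_{Y\sim\pi_{\mathrm{gen}}(\cdot|x)}[e^{-s\phi_\beta(Y|x)}]$ for $s\ge0$. Let $N\sim\mathrm{Poi}(n)|_{>0}$ (Poisson with mean $n$ conditioned to be positive) and, given $N$, let $Y_1,\dots,Y_N$ be i.i.d. from $\pi_{\mathrm{gen}}(\cdot|x)$; $N_y$ is the number of $j$ with $Y_j=y$ and $Z=\sum_{j=1}^N\phi_\beta(Y_j|x)$. Define $\hat\pi_N(y|x)=\mathbb{E}[N_y\phi_\beta(y|x)/Z\mid N]$. *)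

From HB Require Import structures.
From mathcomp Require Import all_boot all_order all_algebra.
From mathcomp Require Import all_classical all_reals all_analysis.
Set Implicit Arguments. Unset Strict Implicit. Unset Printing Implicit Defensive.
Import Order.TTheory GRing.Theory Num.Theory.
Import numFieldNormedType.Exports.
Local Open Scope classical_set_scope.
Local Open Scope ring_scope.

(* The prompt x is fixed throughout; all conditional distributions
   pi_target(.|x), pi_gen(.|x), r(.|x) are represented as functions on Y. *)
Section Defs.
Context {R : realType} {Y : countType}.
Variables (pt pg r : Y -> R) (beta : R).

Definition phi (y : Y) : R := pt y / pg y * expR (beta * r y).

Definition Phi (s : R) : R :=
  fine (\esum_(y in [set: Y]) (pg y * expR (- (s * phi y)))%:E).

Definition Zsum (m : nat) (t : m.-tuple Y) : R := \sum_(j < m) phi (tnth t j).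

Definition tuple_prob (m : nat) (t : m.-tuple Y) : R := \prod_(j < m) pg (tnth t j).

(* hat pi_m(y|x) = E[ N_y phi(y) / Z | N = m ] (with the convention a/0 = 0) *)
Definition pihat (m : nat) (y : Y) : R :=
  fine (\esum_(t in [set: m.-tuple Y])
          (tuple_prob t * ((count_mem y t)%:R * phi y / Zsum t))%:E).

End Defs.

(* pmf of Poi(n) conditioned to be positive, at m >= 1 *)
Definition poisson_pos_pmf {R : realType} (n : R) (m : nat) : R :=
  expR (- n) * n ^+ m / (m`!)%:R / (1 - expR (- n)).

Definition EN_pihat_sq {R : realType} {Y : countType} (pt pg r : Y -> R)
  (beta n : R) (y : Y) : \bar R :=
  \esum_(m in [set m : nat | (0 < m)%N])
     (poisson_pos_pmf n m * (pihat pt pg r beta m y) ^+ 2)%:E.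

(* For a sample containing y we have Z >= phi y > 0, so the summand
   N_y phi(y) / Z of pihat is the integral over s >= 0 of N_y phi(y) e^{-sZ}.
   As e^{-sZ} factorises over an i.i.d. sample, summing over samples of size
   k+1 gives pihat_{k+1}(y) = (k+1) phi(y) pi_gen(y) J_k, where
   J_k = int_0^oo e^{-s phi(y)} Phi(s)^k ds.  Writing J_k^2 as a double
   integral and exchanging the Poisson sum with the integrals (everything is
   nonnegative), sum_k (k+1) w^k / k! = (1 + w) e^w at w = n Phi(s1) Phi(s2)
   yields the integrand.  When phi y = 0 both sides vanish. *)

From HB Require Import structures.
From mathcomp Require Import all_boot all_order all_algebra.
From mathcomp Require Import all_classical all_reals all_analysis.
From mathcomp Require Import measurable_realfun.
From mathcomp Require Import ring.
Set Implicit Arguments.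
Unset Strict Implicit.
Unset Printing Implicit Defensive.
Import Order.TTheory GRing.Theory Num.Theory.
Import numFieldNormedType.Exports.
Local Open Scope classical_set_scope.
Local Open Scope ring_scope.
Local Open Scope ereal_scope.

Section countable_esum.
Variables (R : realType) (T : countType).
Implicit Types (f : T -> \bar R).

Lemma esum_pickle_invE f : (forall x, 0 <= f x) ->
  \esum_(x in [set: T]) f x = \sum_(k <oo) oapp f 0 (pickle_inv k).
Proof.
move=> f0; rewrite nneseries_esumT => [|k]; last by case: pickle_inv.
rewrite (esumID (range (@pickle T))) ?setTI => [|k _]; last by case: pickle_inv.
rewrite [X in _ + X]esum1 ?adde0; last first.
  move=> k /= kNpickle; case E: (pickle_inv k) => [x|//].
  by exfalso; apply: kNpickle; exists x => //; rewrite -[k](@pickle_invK T) E.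
rewrite esum_image; last by move=> x1 x2 _ _ /(pcan_inj (@pickleK_inv T)).
by apply: eq_esum => x _; rewrite pickleK_inv.
Qed.

Lemma esumZl f (c : R) : (0 <= c)%R -> (forall x, 0 <= f x) ->
  \esum_(x in [set: T]) (c%:E * f x) = c%:E * \esum_(x in [set: T]) f x.
Proof.
move=> c0 f0; rewrite !esum_pickle_invE// => [|x]; last by rewrite mule_ge0.
rewrite -nneseriesZl => [|k _]; last by case: pickle_inv.
by apply: eq_eseriesr => k _; case: pickle_inv => //=; rewrite mule0.
Qed.

Lemma esum_eq_single f (y : T) : (forall x, x != y -> f x = 0) -> 0 <= f y ->
  \esum_(x in [set: T]) f x = f y.
Proof.
move=> fNy fy0.
rewrite (esumID [set y]) => [|x _]; last first.
  by case: (eqVneq x y) => [->//|/fNy ->].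
rewrite [X in _ + X]esum1 ?adde0; last by move=> x [_ /eqP]; exact: fNy.
by rewrite setTI esum_set1.
Qed.

Lemma integral_esum d (X : measurableType d) (mu : {measure set X -> \bar R})
    (D : set X) (F : T -> X -> \bar R) : measurable D ->
  (forall t, measurable_fun D (F t)) -> (forall t x, D x -> 0 <= F t x) ->
  \int[mu]_(x in D) (\esum_(t in [set: T]) F t x) =
  \esum_(t in [set: T]) \int[mu]_(x in D) F t x.
Proof.
move=> mD mF F0.
rewrite esum_pickle_invE => [|t]; last by apply: integral_ge0 => x; exact: F0.
transitivity (\int[mu]_(x in D) \sum_(k <oo) oapp (F^~ x) 0 (pickle_inv k)).
  apply: eq_integral => x /[!inE] Dx.
  by rewrite esum_pickle_invE// => t; exact: F0.
rewrite integral_nneseries//.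
- by apply: eq_eseriesr => k _; case: pickle_inv => //=; rewrite integral0.
- by move=> k; case: pickle_inv => //= t; exact: measurable_cst.
- by move=> k x Dx; case: pickle_inv => //= t; exact: F0.
Qed.

End countable_esum.

Section tuple_esum.
Variables (R : realType) (T : countType).

Lemma esum_tupleS m (f : m.+1.-tuple T -> \bar R) : (forall t, 0 <= f t) ->
  \esum_(t in [set: m.+1.-tuple T]) f t =
  \esum_(x in [set: T]) \esum_(t in [set: m.-tuple T]) f [tuple of x :: t].
Proof.
move=> f0; rewrite esum_esum//.
rewrite (reindex_esum ([set: T] `*`` (fun=> [set: m.-tuple T])) _
  (fun xt => [tuple of xt.1 :: xt.2])) //.
split=> //.
- by move=> [x1 t1] [x2 t2] _ _ /(congr1 val) [-> /val_inj ->].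
- move=> t _; exists (thead t, [tuple of behead t]) => //=.
  by rewrite [RHS]tuple_eta.
Qed.

Variables (g : T -> R) (S : R).
Hypothesis g_ge0 : forall x, (0 <= g x)%R.
Hypothesis esum_g : \esum_(x in [set: T]) (g x)%:E = S%:E.

Let S_ge0 : (0 <= S)%R.
Proof. by rewrite -lee_fin -esum_g esum_ge0// => x _; rewrite lee_fin. Qed.

Let prod_ge0 m (t : m.-tuple T) : (0 <= \prod_(j < m) g (tnth t j))%R.
Proof. exact: prodr_ge0. Qed.

Lemma esum_tuple_prod m :
  \esum_(t in [set: m.-tuple T]) (\prod_(j < m) g (tnth t j))%:E = (S ^+ m)%:E.
Proof.
elim: m => [|m IHm].
  rewrite (esum_eq_single (y := [tuple])) ?big_ord0// => t.
  by rewrite tuple0 eqxx.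
rewrite esum_tupleS => [|t]; last by rewrite lee_fin.
transitivity (\esum_(x in [set: T]) ((S ^+ m)%:E * (g x)%:E)).
  apply: eq_esum => x _; rewrite muleC -IHm -esumZl// => [|t]; last first.
    by rewrite lee_fin.
  apply: eq_esum => t _; rewrite big_ord_recl tnth0 EFinM.
  by under eq_bigr do rewrite tnthS.
rewrite esumZl; [|exact: exprn_ge0|by move=> x; rewrite lee_fin].
by rewrite esum_g -EFinM -exprSr.
Qed.

Lemma esum_tuple_prod_count (y : T) m :
  \esum_(t in [set: m.-tuple T])
     (\prod_(j < m) g (tnth t j) * (count_mem y t)%:R)%:E =
  (m%:R * g y * S ^+ m.-1)%:E.
Proof.
elim: m => [|m IHm].
  by rewrite esum1 ?mul0r// => t _; rewrite tuple0 /= mulr0.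
have P_ge0 (t : m.-tuple T) : 0 <= (\prod_(j < m) g (tnth t j))%:E.
  by rewrite lee_fin.
have C_ge0 (t : m.-tuple T) :
  0 <= (\prod_(j < m) g (tnth t j) * (count_mem y t)%:R)%:E.
  by rewrite lee_fin mulr_ge0.
have esum_cons x :
    \esum_(t in [set: m.-tuple T])
       (\prod_(j < m.+1) g (tnth [tuple of x :: t] j)
        * (count_mem y [tuple of x :: t])%:R)%:E =
    (S ^+ m)%:E * (g x * (x == y)%:R)%:E
    + (m%:R * g y * S ^+ m.-1)%:E * (g x)%:E.
  transitivity (\esum_(t in [set: m.-tuple T])
      ((g x * (x == y)%:R)%:E * (\prod_(j < m) g (tnth t j))%:E +
       (g x)%:E * (\prod_(j < m) g (tnth t j) * (count_mem y t)%:R)%:E)).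
    apply: eq_esum => t _; rewrite -!EFinM -EFinD big_ord_recl tnth0 /=.
    under eq_bigr do rewrite tnthS.
    by rewrite natrD; congr (_%:E); ring.
  rewrite esumD => [|t _|t _]; last 2 first.
    by rewrite mule_ge0 ?P_ge0 ?lee_fin ?mulr_ge0.
    by rewrite mule_ge0 ?C_ge0 ?lee_fin.
  by rewrite !esumZl ?mulr_ge0 ?esum_tuple_prod ?IHm // muleC [X in _ + X]muleC.
rewrite esum_tupleS => [|t]; last by rewrite lee_fin mulr_ge0.
under eq_esum do rewrite esum_cons.
rewrite esumD => [|x _|x _]; last 2 first.
  by rewrite mule_ge0 ?lee_fin ?mulr_ge0 ?exprn_ge0.
  by rewrite mule_ge0 ?lee_fin ?mulr_ge0 ?exprn_ge0.
rewrite !esumZl; last 4 first.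
- by rewrite !mulr_ge0 ?exprn_ge0.
- by move=> x; rewrite lee_fin.
- exact: exprn_ge0.
- by move=> x; rewrite lee_fin mulr_ge0.
rewrite esum_g (esum_eq_single (y := y)) => [|x /negPf->|]; last 2 first.
  by rewrite mulr0.
  by rewrite lee_fin mulr_ge0.
rewrite eqxx mulr1 -!EFinM -EFinD; congr (_%:E).
by case: m {IHm esum_cons P_ge0 C_ge0} => [|m] /=; rewrite ?exprS; ring.
Qed.

End tuple_esum.

Section exponential_integrals.
Variable R : realType.
Local Notation mu := (@lebesgue_measure R).

Lemma measurable_expRNM (c : R) :
  measurable_fun setT (fun s : R => (expR (- (s * c)))%:E).
Proof.
apply/measurable_EFinP; apply: measurableT_comp => //.
by apply: measurableT_comp => //; exact: measurable_funM.
Qed.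

Lemma integral_expRNM (c : R) : (0 < c)%R ->
  \int[mu]_(s in `[0%R, +oo[%classic) (expR (- (s * c)))%:E = (c^-1)%:E.
Proof.
move=> c_gt0.
transitivity (\int[mu]_(s in `[0%R, +oo[%classic)
                ((c^-1)%:E * (c * expR (- c * s))%:E)).
  apply: eq_integral => s _.
  by rewrite -EFinM mulrA mulVf ?gt_eqF// mul1r mulNr mulrC.
rewrite ge0_integralZl_EFin ?invr_ge0 ?ltW//.
- by rewrite integral_mkcond restrict_EFin integral_exponential_pdf// mule1.
- by move=> s _; rewrite lee_fin mulr_ge0 ?expR_ge0 ?ltW.
- apply/measurable_EFinP; apply: measurable_funM => //.
  by apply: measurableT_comp => //; exact: measurable_funM.
Qed.

Lemma divr_integral_expRNM (c z : R) : (0 <= c)%R -> (c != 0%R -> (0 < z)%R) ->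
  (c / z)%:E = \int[mu]_(s in `[0%R, +oo[%classic) (c * expR (- (s * z)))%:E.
Proof.
move=> c_ge0 z_pos; have [->|/z_pos z_gt0] := eqVneq c 0%R.
  by under eq_integral do rewrite mul0r; rewrite mul0r integral0.
under eq_integral do rewrite EFinM.
rewrite ge0_integralZl_EFin//; last first.
  exact: measurable_funS (measurable_expRNM z).
by rewrite integral_expRNM// -EFinM.
Qed.

End exponential_integrals.

Section exponential_series.
Variable R : realType.
Implicit Type w : R.

Lemma eseries_expR w : \sum_(k <oo) (w ^+ k / k`!%:R)%:E = (expR w)%:E.
Proof.
rewrite expRE /pseries -exp_coeffE -EFin_lim; last first.
  exact: is_cvg_series_exp_coeff.
by apply: congr_lim; apply/funext => N /=; rewrite /series /= sumEFin.
Qed.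

Lemma nneseries_natmul_expR w : (0 <= w)%R ->
  \sum_(k <oo) (k%:R * w ^+ k / k`!%:R)%:E = (w * expR w)%:E.
Proof.
move=> w_ge0.
have term_ge0 k : 0 <= ((k%:R * w ^+ k / k`!%:R)%:E : \bar R).
  by rewrite lee_fin mulr_ge0 ?invr_ge0 ?mulr_ge0 ?exprn_ge0.
rewrite nneseries_recl //= !mul0r add0e -nneseries_addn//.
transitivity (\sum_(k <oo) (w%:E * (w ^+ k / k`!%:R)%:E)).
  apply: eq_eseriesr => k _; rewrite -EFinM; congr (_%:E).
  rewrite addn1 factS natrM exprS.
  have k1_neq0 : (k.+1%:R : R) != 0%R by rewrite pnatr_eq0.
  have kfact_neq0 : (k`!%:R : R) != 0%R by rewrite pnatr_eq0 -lt0n fact_gt0.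
  by field; rewrite kfact_neq0 addrC natr1 k1_neq0.
rewrite nneseriesZl => [|k _]; last first.
  by rewrite lee_fin mulr_ge0 ?invr_ge0 ?exprn_ge0.
by rewrite eseries_expR.
Qed.

Lemma nneseries_succmul_expR w : (0 <= w)%R ->
  \sum_(k <oo) (k.+1%:R * w ^+ k / k`!%:R)%:E = ((1 + w) * expR w)%:E.
Proof.
move=> w_ge0.
transitivity (\sum_(k <oo)
  ((w ^+ k / k`!%:R)%:E + (k%:R * w ^+ k / k`!%:R)%:E)).
  by apply: eq_eseriesr => k _; rewrite -EFinD -natr1; congr (_%:E); ring.
rewrite nneseriesD; last 2 first.
- by move=> k _ _; rewrite lee_fin mulr_ge0 ?invr_ge0 ?exprn_ge0.
- by move=> k _ _; rewrite lee_fin mulr_ge0 ?invr_ge0 ?mulr_ge0 ?exprn_ge0.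
by rewrite eseries_expR nneseries_natmul_expR// -EFinD mulrDl mul1r.
Qed.

End exponential_series.

Section pihat_second_moment.
Variables (R : realType) (Y : countType) (pt pg r : Y -> R) (beta : R).
Hypothesis pt_ge0 : forall y, (0 <= pt y)%R.
Hypothesis pg_gt0 : forall y, (0 < pg y)%R.
Hypothesis pg_sum1 : \esum_(y in [set: Y]) (pg y)%:E = 1.

Local Notation phi := (phi pt pg r beta).
Local Notation Phi := (Phi pt pg r beta).
Local Notation pihat := (pihat pt pg r beta).
Local Notation Z := (Zsum pt pg r beta).
Local Notation D := (`[0%R, +oo[%classic : set R).
Local Notation mu := (@lebesgue_measure R).

Lemma phi_ge0 z : (0 <= phi z)%R.
Proof. by rewrite /phi mulr_ge0 ?expR_ge0// divr_ge0// ltW. Qed.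

Lemma tuple_prob_ge0 m (t : m.-tuple Y) : (0 <= tuple_prob pg t)%R.
Proof. by rewrite prodr_ge0// => j _; exact: ltW. Qed.

Lemma pihat_eq0 m y : phi y = 0%R -> pihat m y = 0%R.
Proof.
move=> phi_y0; rewrite /pihat esum1// => t _.
by rewrite phi_y0 mulr0 mul0r mulr0.
Qed.

Definition Phi_summand (s : R) (z : Y) : R := pg z * expR (- (s * phi z)).

Lemma Phi_summand_ge0 s z : (0 <= Phi_summand s z)%R.
Proof. by rewrite mulr_ge0 ?expR_ge0 ?ltW. Qed.

Lemma le_esum_Phi_summand s t : (0 <= s <= t)%R ->
  \esum_(z in [set: Y]) (Phi_summand t z)%:E <=
  \esum_(z in [set: Y]) (Phi_summand s z)%:E.
Proof.
move=> /andP[s_ge0 le_st]; apply: le_esum => z _.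
rewrite lee_fin ler_wpM2l ?(ltW (pg_gt0 z))//.
by rewrite ler_expR lerN2 ler_wpM2r ?phi_ge0.
Qed.

Lemma esum_Phi_summand0 : \esum_(z in [set: Y]) (Phi_summand 0 z)%:E = 1.
Proof.
rewrite -pg_sum1; apply: eq_esum => z _.
by rewrite /Phi_summand mul0r oppr0 expR0 mulr1.
Qed.

Lemma esum_Phi_summand s : (0 <= s)%R ->
  \esum_(z in [set: Y]) (Phi_summand s z)%:E = (Phi s)%:E.
Proof.
move=> s_ge0; rewrite /Phi fineK// ge0_fin_numE; last first.
  by apply: esum_ge0 => z _; rewrite lee_fin Phi_summand_ge0.
apply: (le_lt_trans (le_esum_Phi_summand (s := 0%R) _)); first by rewrite lexx.
by rewrite esum_Phi_summand0 ltry.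
Qed.

Lemma Phi_ge0 s : (0 <= Phi s)%R.
Proof.
by rewrite fine_ge0// esum_ge0// => z _; rewrite lee_fin Phi_summand_ge0.
Qed.

Lemma Phi_le1 s : (0 <= s)%R -> (Phi s <= 1)%R.
Proof.
move=> s_ge0; rewrite -lee_fin -esum_Phi_summand// -esum_Phi_summand0.
by apply: le_esum_Phi_summand; rewrite lexx.
Qed.

Lemma Phi_nonincreasing s t : (0 <= s <= t)%R -> (Phi t <= Phi s)%R.
Proof.
move=> /andP[s_ge0 le_st].
rewrite -lee_fin -!esum_Phi_summand ?(le_trans s_ge0)//.
by apply: le_esum_Phi_summand; rewrite s_ge0.
Qed.

(* For s < 0 the series defining Phi may diverge and [fine] then returns 0, so
   Phi is only monotone on D; measurability goes through s |-> Phi (max s 0). *)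
Lemma measurable_Phi : measurable_fun D Phi.
Proof.
have : measurable_fun D (fun s => Phi (Num.max s 0%R)).
  apply: nonincreasing_measurable => // s t le_st.
  by apply: Phi_nonincreasing; rewrite le_max lexx orbT /= ge_max !le_max le_st lexx !orbT.
apply: eq_measurable_fun => s /[!inE] /= /[!in_itv] /= /andP[s_ge0 _].
by rewrite max_l.
Qed.

Lemma tuple_prob_expRNM m (t : m.-tuple Y) s :
  (tuple_prob pg t * expR (- (s * Z t)) =
   \prod_(j < m) Phi_summand s (tnth t j))%R.
Proof.
rewrite /tuple_prob /Zsum /Phi_summand big_split /=; congr (_ * _)%R.
by rewrite mulr_sumr -sumrN expR_sum.
Qed.

Variable y : Y.
Hypothesis phi_y_gt0 : (0 < phi y)%R.

Definition laplace_term (k : nat) (s : R) : R :=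
  expR (- (s * phi y)) * Phi s ^+ k.

Lemma laplace_term_ge0 k s : (0 <= laplace_term k s)%R.
Proof. by rewrite mulr_ge0 ?expR_ge0 ?exprn_ge0 ?Phi_ge0. Qed.

Lemma measurable_laplace_term k :
  measurable_fun D (fun s => (laplace_term k s)%:E).
Proof.
apply/measurable_EFinP; apply: measurable_funM.
  by apply/measurable_EFinP; exact: measurable_funS (measurable_expRNM _).
exact: measurable_funX measurable_Phi.
Qed.

Lemma integral_laplace_term_lt_pinfty k :
  \int[mu]_(s in D) (laplace_term k s)%:E < +oo.
Proof.
apply: (@le_lt_trans _ _ ((phi y)^-1)%:E); last exact: ltry.
rewrite -integral_expRNM//; apply: ge0_le_integral => //.
- by move=> s _; rewrite lee_fin laplace_term_ge0.
- exact: measurable_laplace_term.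
- exact: measurable_funS (measurable_expRNM _).
move=> s; rewrite /= in_itv /= andbT => s_ge0.
rewrite lee_fin -[leRHS]mulr1 ler_wpM2l ?expR_ge0//.
by rewrite exprn_ile1 ?Phi_ge0 ?Phi_le1.
Qed.

Definition laplace_integral (k : nat) : R :=
  fine (\int[mu]_(s in D) (laplace_term k s)%:E).

Lemma integral_laplace_termE k :
  \int[mu]_(s in D) (laplace_term k s)%:E = (laplace_integral k)%:E.
Proof.
rewrite fineK// ge0_fin_numE ?integral_laplace_term_lt_pinfty//.
by apply: integral_ge0 => s _; rewrite lee_fin laplace_term_ge0.
Qed.

Lemma laplace_integral_ge0 k : (0 <= laplace_integral k)%R.
Proof.
rewrite -lee_fin -integral_laplace_termE integral_ge0// => s _.
by rewrite lee_fin laplace_term_ge0.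
Qed.

Lemma integralZl_laplace_term k (c : R) : (0 <= c)%R ->
  \int[mu]_(s in D) (c * laplace_term k s)%:E = (c * laplace_integral k)%:E.
Proof.
move=> c_ge0; under eq_integral do rewrite EFinM.
rewrite ge0_integralZl_EFin ?integral_laplace_termE//.
- by move=> s _; rewrite lee_fin laplace_term_ge0.
- exact: measurable_laplace_term.
Qed.

Lemma count_weight_ge0 m (t : m.-tuple Y) :
  (0 <= tuple_prob pg t * (count_mem y t)%:R * phi y)%R.
Proof. by rewrite mulr_ge0 ?phi_ge0// mulr_ge0 ?tuple_prob_ge0 ?ler0n. Qed.

Lemma pihat_summand_integral m (t : m.-tuple Y) :
  (tuple_prob pg t * ((count_mem y t)%:R * phi y / Z t))%:E =
  \int[mu]_(s in D)
     (tuple_prob pg t * (count_mem y t)%:R * phi y * expR (- (s * Z t)))%:E.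
Proof.
set c := (tuple_prob pg t * (count_mem y t)%:R * phi y)%R.
have -> : (tuple_prob pg t * ((count_mem y t)%:R * phi y / Z t) = c / Z t)%R.
  by rewrite /c !mulrA.
rewrite divr_integral_expRNM ?count_weight_ge0// => c_neq0.
have count_neq0 : count_mem y t != 0%N.
  by apply: contraNneq c_neq0 => count0; rewrite /c count0 mulr0 mul0r.
have /tnthP[j yj] : y \in t by rewrite -has_pred1 has_count lt0n.
apply: (lt_le_trans phi_y_gt0); rewrite /Zsum (bigD1 j)//= -yj lerDl.
by rewrite sumr_ge0// => i _; exact: phi_ge0.
Qed.

Lemma esum_tuple_count_expRNM m s : (0 <= s)%R ->
  \esum_(t in [set: m.-tuple Y])
     (tuple_prob pg t * (count_mem y t)%:R * phi y * expR (- (s * Z t)))%:E =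
  (phi y * m%:R * pg y * laplace_term m.-1 s)%:E.
Proof.
move=> s_ge0.
transitivity (\esum_(t in [set: m.-tuple Y]) ((phi y)%:E *
    (\prod_(j < m) Phi_summand s (tnth t j) * (count_mem y t)%:R)%:E)).
  apply: eq_esum => t _; rewrite -EFinM -tuple_prob_expRNM; congr (_%:E); ring.
rewrite esumZl ?phi_ge0// => [|t]; last first.
  by rewrite lee_fin mulr_ge0// prodr_ge0// => j _; exact: Phi_summand_ge0.
rewrite (esum_tuple_prod_count (Phi_summand_ge0 s) (esum_Phi_summand s_ge0)).
by rewrite -EFinM /laplace_term /Phi_summand; congr (_%:E); ring.
Qed.

Lemma pihatSE m :
  pihat m.+1 y = (phi y * m.+1%:R * pg y * laplace_integral m)%R.
Proof.
rewrite /pihat; under eq_esum do rewrite pihat_summand_integral.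
rewrite -integral_esum//; last 2 first.
- move=> t; apply/measurable_EFinP; apply: measurable_funM => //.
  by apply/measurable_EFinP; exact: measurable_funS (measurable_expRNM _).
- by move=> t s _; rewrite lee_fin mulr_ge0 ?expR_ge0 ?count_weight_ge0.
have scale_ge0 : (0 <= phi y * m.+1%:R * pg y)%R.
  by rewrite mulr_ge0 ?(ltW (pg_gt0 y))// mulr_ge0 ?phi_ge0.
rewrite -[RHS]/(fine (_%:E)) -(integralZl_laplace_term _ scale_ge0).
congr fine; apply: eq_integral => s; rewrite inE /= in_itv /= andbT => s_ge0.
by rewrite esum_tuple_count_expRNM.
Qed.

Variable n : R.
Hypothesis n_gt0 : (0 < n)%R.

Definition integrand (s1 s2 : R) : R :=
  (n + n ^+ 2 * Phi s1 * Phi s2) * pg y ^+ 2 * expR (- ((s1 + s2) * phi y))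
  * expR (n * (Phi s1 * Phi s2 - 1)).

Definition integrand_coef (k : nat) : R :=
  expR (- n) * n ^+ k.+1 * k.+1%:R / k`!%:R * pg y ^+ 2.

Lemma integrand_coef_ge0 k : (0 <= integrand_coef k)%R.
Proof.
rewrite mulr_ge0 ?sqr_ge0// mulr_ge0 ?invr_ge0// mulr_ge0//.
by rewrite mulr_ge0 ?expR_ge0 ?exprn_ge0 ?ltW.
Qed.

Lemma integrand_eseries s1 s2 : (integrand s1 s2)%:E =
  \sum_(k <oo) (integrand_coef k * laplace_term k s1 * laplace_term k s2)%:E.
Proof.
set w := (n * (Phi s1 * Phi s2))%R.
set c := (expR (- n) * n * pg y ^+ 2
          * expR (- (s1 * phi y)) * expR (- (s2 * phi y)))%R.
have w_ge0 : (0 <= w)%R by rewrite mulr_ge0 ?mulr_ge0 ?Phi_ge0 ?ltW.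
have c_ge0 : (0 <= c)%R by rewrite !mulr_ge0 ?expR_ge0 ?sqr_ge0 ?ltW.
transitivity (\sum_(k <oo) (c%:E * (k.+1%:R * w ^+ k / k`!%:R)%:E)); last first.
  apply: eq_eseriesr => k _; rewrite -EFinM; congr (_%:E).
  rewrite /integrand_coef /laplace_term /c /w.
  by rewrite !exprMn [(n ^+ k.+1)%R]exprS; ring.
rewrite nneseriesZl => [|k _]; last first.
  by rewrite lee_fin mulr_ge0 ?invr_ge0 ?mulr_ge0 ?exprn_ge0.
rewrite nneseries_succmul_expR// -EFinM /integrand; congr (_%:E).
have -> : expR (- ((s1 + s2) * phi y)) =
          (expR (- (s1 * phi y)) * expR (- (s2 * phi y)))%R.
  by rewrite -expRD mulrDl opprD.
have -> : expR (n * (Phi s1 * Phi s2 - 1)) = (expR (- n) * expR w)%R.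
  by rewrite -expRD mulrBr mulr1 addrC.
by rewrite /c /w; ring.
Qed.

Lemma integral_eseries_laplace_term (a : nat -> R) : (forall k, 0 <= a k)%R ->
  \int[mu]_(s in D) (\sum_(k <oo) (a k * laplace_term k s)%:E) =
  \sum_(k <oo) (a k * laplace_integral k)%:E.
Proof.
move=> a_ge0; rewrite integral_nneseries//.
- by apply: eq_eseriesr => k _; rewrite integralZl_laplace_term.
- move=> k; apply/measurable_EFinP; apply: measurable_funM => //.
  by apply/measurable_EFinP; exact: measurable_laplace_term.
- by move=> k s _; rewrite lee_fin mulr_ge0 ?laplace_term_ge0.
Qed.

Lemma double_integral_eseries :
  \int[mu]_(s1 in D) \int[mu]_(s2 in D) (integrand s1 s2)%:E =
  \sum_(k <oo)
     (integrand_coef k * laplace_integral k * laplace_integral k)%:E.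
Proof.
under eq_integral => s1 _.
  under eq_integral do rewrite integrand_eseries.
  rewrite integral_eseries_laplace_term => [|k]; last first.
    by rewrite mulr_ge0 ?integrand_coef_ge0 ?laplace_term_ge0.
  under eq_eseriesr do rewrite mulrAC.
  over.
rewrite integral_eseries_laplace_term// => k.
by rewrite mulr_ge0 ?integrand_coef_ge0 ?laplace_integral_ge0.
Qed.

Lemma onem_expRN_gt0 : (0 < 1 - expR (- n))%R.
Proof. by rewrite subr_gt0 expR_lt1 oppr_lt0. Qed.

Lemma poisson_pos_pmf_ge0 m : (0 <= poisson_pos_pmf n m)%R.
Proof.
by rewrite !mulr_ge0 ?invr_ge0 ?expR_ge0 ?exprn_ge0 ?ltW ?onem_expRN_gt0.
Qed.

Lemma EN_pihat_sqE : EN_pihat_sq pt pg r beta n y =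
  ((phi y ^+ 2 / (1 - expR (- n)))%:E *
   \int[mu]_(s1 in D) \int[mu]_(s2 in D) (integrand s1 s2)%:E).
Proof.
have term_ge0 m : 0 <= (poisson_pos_pmf n m * pihat m y ^+ 2)%:E.
  by rewrite lee_fin mulr_ge0 ?poisson_pos_pmf_ge0 ?sqr_ge0.
rewrite double_integral_eseries /EN_pihat_sq -nneseries_esum//.
rewrite -(ereal_series _ 1) -nneseries_addn//.
rewrite -nneseriesZl => [|k _]; last first.
  have JJ_ge0 := mulr_ge0 (laplace_integral_ge0 k) (laplace_integral_ge0 k).
  by rewrite lee_fin -mulrA mulr_ge0 ?integrand_coef_ge0.
apply: eq_eseriesr => k _; congr (_%:E).
rewrite addn1 pihatSE /poisson_pos_pmf /integrand_coef factS natrM.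
have k1_neq0 : (k.+1%:R : R) != 0%R by rewrite pnatr_eq0.
have kfact_neq0 : (k`!%:R : R) != 0%R by rewrite pnatr_eq0 -lt0n fact_gt0.
have onem_neq0 := lt0r_neq0 onem_expRN_gt0.
by field; rewrite kfact_neq0 onem_neq0 addrC natr1 k1_neq0.
Qed.

End pihat_second_moment.

Local Close Scope ereal_scope.

Theorem lemmaD2 (R : realType) (Y : countType) (pt pg r : Y -> R) (beta n : R)
  (pt_ge0 : forall y, 0 <= pt y)
  (pt_sum1 : \esum_(y in [set: Y]) (pt y)%:E = 1%E)
  (pg_gt0 : forall y, 0 < pg y)
  (pg_sum1 : \esum_(y in [set: Y]) (pg y)%:E = 1%E)
  (beta_gt0 : 0 < beta) (n_gt0 : 0 < n) (y : Y) :
  EN_pihat_sq pt pg r beta n y =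
  (((phi pt pg r beta y) ^+ 2 / (1 - expR (- n)))%:E *
   \int[@lebesgue_measure R]_(s1 in `[0%R, +oo[%classic)
     \int[@lebesgue_measure R]_(s2 in `[0%R, +oo[%classic)
       ((n + n ^+ 2 * Phi pt pg r beta s1 * Phi pt pg r beta s2) * (pg y) ^+ 2
        * expR (- ((s1 + s2) * phi pt pg r beta y))
        * expR (n * (Phi pt pg r beta s1 * Phi pt pg r beta s2 - 1)))%:E)%E.
Proof.
have [phi_y0|phi_y_neq0] := eqVneq (phi pt pg r beta y) 0.
  rewrite phi_y0 expr0n mul0r mul0e; apply: esum1 => m _.
  by rewrite pihat_eq0// expr0n mulr0.
apply: EN_pihat_sqE => //.
by rewrite lt_neqAle eq_sym phi_y_neq0 phi_ge0.
Qed.
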